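(* Let $(S,d)$ be a finite metric space partitioned into two disjoint groups $S=S_1\cup S_2$, let $k_1,k_2$ be nonnegative integers with $k=k_1+k_2$, and let $r^*$ be the optimal radius of the fair $k$-center problem on this instance. For $l\in\{1,2\}$ let $\Gamma_l\subseteq S_l$ be a $2r^*$-independent center set of $S_l$. Suppose that for some $l\in\{1,2\}$ we have $|\Gamma_l|>k_l$ and $|\Gamma_{3-l}|\le k_{3-l}$. Define $\Gamma_l'=\{i\in\Gamma_l : d(i,\Gamma_{3-l})>3r^*\}$ and $C=\Gamma_l'\cup\Gamma_{3-l}$. Then (1) $|\Gamma_l'|\le k_l$, $|\Gamma_{3-l}|\le k_{3-l}$ and $|C|\le k$; and (2) $d(s,C)\le 5r^*$ for every $s\in S$.
   Context: The fair $k$-center problem: a set $C\subseteq S$ is feasible if $|C\cap S_l|\le k_l$ for each group $l$; its cost is $\max_{s\in S}d(s,C)$ with $d(s,C)=\min_{c\in C}d(s,c)$ (and $d(s,\emptyset)=\infty$). The optimal radius $r^*$ is the minimum cost over all feasible $C$. For $T\subseteq S$, a set $\Gamma\subseteq T$ is a $\lambda$-independent center set of $T$ if (1) $d(p,q)>\lambda$ for any two distinct $p,q\in\Gamma$, and (2) for every $p\in T$ there is $q\in\Gamma$ with $d(p,q)\le\lambda$. *)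

From HB Require Import structures.
From mathcomp Require Import all_boot all_order all_algebra.
From mathcomp Require Import reals constructive_ereal.
Set Implicit Arguments. Unset Strict Implicit. Unset Printing Implicit Defensive.
Import Order.TTheory GRing.Theory Num.Theory.
Local Open Scope ring_scope.
Local Open Scope ereal_scope.

Section FairKCenter.
Variables (R : realType) (T : finType).

Definition is_metric (d : T -> T -> R) : Prop :=
  [/\ forall x y, d x y = 0%R <-> x = y,
      forall x y, d x y = d y x &
      forall x y z, (d x z <= d x y + d y z)%R].

Definition dist (d : T -> T -> R) (s : T) (C : {set T}) : \bar R :=
  \big[Order.min/+oo]_(c in C) (d s c)%:E.

Definition cost (d : T -> T -> R) (C : {set T}) : \bar R :=
  \big[Order.max/-oo]_(s : T) dist d s C.

Definition feasible (Sg : 'I_2 -> {set T}) (kg : 'I_2 -> nat) (C : {set T}) : bool :=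
  [forall l, #|C :&: Sg l| <= kg l]%N.

Definition opt_radius (d : T -> T -> R) (Sg : 'I_2 -> {set T}) (kg : 'I_2 -> nat)
  : \bar R :=
  \big[Order.min/+oo]_(C : {set T} | feasible Sg kg C) cost d C.

Definition independent_center_set (d : T -> T -> R) (lam : \bar R)
  (T0 Gam : {set T}) : Prop :=
  [/\ Gam \subset T0,
      (forall p q, p \in Gam -> q \in Gam -> p != q -> lam < (d p q)%:E) &
      (forall p, p \in T0 -> exists2 q, q \in Gam & (d p q)%:E <= lam)].

End FairKCenter.

Definition other (l : 'I_2) : 'I_2 := if l == ord0 then ord_max else ord0.

From HB Require Import structures.
From mathcomp Require Import all_boot all_order all_algebra.
From mathcomp Require Import reals constructive_ereal.
From mathcomp Require Import lra.
Import Order.TTheory GRing.Theory Num.Theory.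
Local Open Scope ring_scope.
Local Open Scope ereal_scope.

(* Fix an optimal solution C* of radius r. Every point of Γ'_l lies within r
   of a center of C*, and that center is in S_l: otherwise it would be within
   2r of Γ_{3-l}, putting the point within 3r of Γ_{3-l}. Since Γ'_l is
   2r-separated, the assignment to these centers is injective, so
   |Γ'_l| <= |C* ∩ S_l| <= k_l. For coverage, s is within 2r of some i in Γ_l
   or Γ_{3-l}; if i is in Γ_l but not in Γ'_l, it is within 3r of Γ_{3-l}. *)

Lemma ord2P (l : 'I_2) : l = ord0 \/ l = ord_max.
Proof. by case: l => -[|[|//]] ?; [left|right]; apply: val_inj. Qed.

Lemma other_comm {U : Type} (op : U -> U -> U) (f : 'I_2 -> U) (l : 'I_2) :
  commutative op -> op (f l) (f (other l)) = op (f ord0) (f ord_max).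
Proof. by move=> opC; case: (ord2P l) => ->. Qed.

Definition far_centers {R : realType} {T : finType} (d : T -> T -> R)
    (G1 G2 : {set T}) (x : \bar R) : {set T} :=
  [set i in G1 | x < dist d i G2].

Section Metric.
Context {R : realType} {T : finType} {d : T -> T -> R}.
Hypothesis metric_d : is_metric d.

Lemma metric_ge0 x y : (0 <= d x y)%R.
Proof.
case: metric_d => d0 dC dtri; have := dtri x y x.
by rewrite (dC y x) (proj2 (d0 x x) erefl); lra.
Qed.

Lemma dist_leP s (C : {set T}) (x : R) :
  dist d s C <= x%:E <-> exists2 c, c \in C & (d s c <= x)%R.
Proof.
split=> [|[c cC dsc]]; last by apply: bigmin_inf cC _; rewrite lee_fin.
rewrite /dist; elim/big_ind: _ => [|a b IHa IHb|c cC]; first by rewrite leNgt ltey.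
  by rewrite ge_min => /orP[/IHa|/IHb].
by rewrite lee_fin; exists c.
Qed.

Lemma dist_ge0 s (C : {set T}) : 0 <= dist d s C.
Proof. by apply: le_bigmin => [|c _]; rewrite ?leey ?lee_fin ?metric_ge0. Qed.

Lemma le_dist_cost s (C : {set T}) : dist d s C <= cost d C.
Proof. exact: (le_bigmax _ (fun s => dist d s C)). Qed.

Lemma opt_radius_attained (Sg : 'I_2 -> {set T}) (kg : 'I_2 -> nat) :
  exists2 C, feasible Sg kg C & opt_radius d Sg kg = cost d C.
Proof.
have feasible0 : feasible Sg kg set0 by apply/forallP => j; rewrite set0I cards0.
by have [C] := eq_bigmin _ _ _ feasible0 (fun C _ => leey (cost d C)); exists C.
Qed.

Lemma opt_radius_ge0 (x : T) (Sg : 'I_2 -> {set T}) (kg : 'I_2 -> nat) :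
  0 <= opt_radius d Sg kg.
Proof.
have [C _ ->] := opt_radius_attained Sg kg.
exact: le_trans (dist_ge0 x C) (le_dist_cost x C).
Qed.

Lemma indep_center_close {S G : {set T}} {lam : R} {s : T} :
  independent_center_set d lam%:E S G -> s \in S ->
  exists2 q, q \in G & (d s q <= lam)%R.
Proof. by case=> _ _ /[apply] -[q qG]; rewrite lee_fin; exists q. Qed.

Lemma card_separated_le (G A : {set T}) (r : R) :
  (forall p q, p \in G -> q \in G -> p != q -> (2 * r < d p q)%R) ->
  (forall i, i \in G -> exists2 c, c \in A & (d i c <= r)%R) ->
  (#|G| <= #|A|)%N.
Proof.
move=> sepG coverG.
pose near i c := i \in G -> c \in A /\ (d i c <= r)%R.
have [f fP] : exists f : T -> T, forall i, near i (f i).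
  apply: (@fin_all_exists _ (fun=> T) near).
  move=> i; rewrite /near.
  by have [/coverG[c]|] := boolP (i \in G); [exists c | exists i].
have f_inj : {in G &, injective f}.
  move=> i j iG jG fij; apply/eqP; apply: contraT => /(sepG _ _ iG jG).
  case: metric_d => _ dC dtri; have := dtri i (f i) j.
  rewrite fij (dC (f j) j); have [_] := fP i iG; have [_] := fP j jG.
  by rewrite fij; lra.
rewrite -(card_in_imset f_inj).
apply/subset_leq_card/subsetP => _ /imsetP[i iG ->].
by case: (fP i iG).
Qed.

Section TwoGroups.
Context {S1 S2 G1 G2 : {set T}} {r : R}.
Hypothesis cover_S : S1 :|: S2 = [set: T].
Hypothesis indep1 : independent_center_set d (2 * r)%:E S1 G1.
Hypothesis indep2 : independent_center_set d (2 * r)%:E S2 G2.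

Lemma S1_or_S2 s : s \in S1 \/ s \in S2.
Proof.
have : s \in S1 :|: S2 by rewrite cover_S inE.
by rewrite inE => /orP[]; auto.
Qed.

Lemma card_far_le {C : {set T}} :
  cost d C <= r%:E -> (#|far_centers d G1 G2 (3 * r)%:E| <= #|C :&: S1|)%N.
Proof.
move=> costC; case: metric_d => _ _ dtri.
rewrite /far_centers; apply: (card_separated_le _ _ r) => [p q|i].
  rewrite !inE => /andP[pG _] /andP[qG _]; case: indep1 => _ sep _.
  by move=> /(sep _ _ pG qG).
rewrite inE => /andP[iG far_i].
have [c cC dic] := (dist_leP i C r).1 (le_trans (le_dist_cost i C) costC).
exists c; rewrite // inE cC.
case: (S1_or_S2 c) => // /(indep_center_close indep2)[q qG dcq].
move: far_i; rewrite ltNge => /negP[]; apply/dist_leP.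
by exists q => //; have := dtri i c q; lra.
Qed.

Lemma dist_far_centers_le s :
  dist d s (far_centers d G1 G2 (3 * r)%:E :|: G2) <= (5 * r)%:E.
Proof.
case: metric_d => _ _ dtri; apply/dist_leP.
case: (S1_or_S2 s) => [/(indep_center_close indep1)|/(indep_center_close indep2)].
- move=> [q qG dsq]; have d0 := metric_ge0 s q.
  have [far_q|] := boolP (q \in far_centers d G1 G2 (3 * r)%:E).
    by exists q; [rewrite in_setU far_q | lra].
  rewrite inE qG /= -leNgt => /dist_leP[q' q'G dqq'].
  by exists q'; [rewrite in_setU q'G orbT | have := dtri s q q'; lra].
- move=> [q qG dsq]; have d0 := metric_ge0 s q.
  by exists q; [rewrite in_setU qG orbT | lra].
Qed.

End TwoGroups.
End Metric.

Theorem theorem1 (R : realType) (T : finType) (d : T -> T -> R)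
  (Sg : 'I_2 -> {set T}) (kg : 'I_2 -> nat) (Gam : 'I_2 -> {set T}) (l : 'I_2) :
  is_metric d ->
  [disjoint Sg ord0 & Sg ord_max] ->
  Sg ord0 :|: Sg ord_max = [set: T] ->
  (forall j, independent_center_set d (2%:E * opt_radius d Sg kg) (Sg j) (Gam j)) ->
  (kg l < #|Gam l|)%N ->
  (#|Gam (other l)| <= kg (other l))%N ->
  let rs := opt_radius d Sg kg in
  let Gam' := [set i in Gam l | 3%:E * rs < dist d i (Gam (other l))] in
  let C := Gam' :|: Gam (other l) in
  [/\ (#|Gam'| <= kg l)%N, (#|Gam (other l)| <= kg (other l))%N,
      (#|C| <= kg ord0 + kg ord_max)%N &
      forall s : T, dist d s C <= 5%:E * rs].
Proof.
move=> metric_d _ cover_S indep small_l small_o; cbv zeta.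
have cover_l : Sg l :|: Sg (other l) = [set: T].
  by rewrite (other_comm _ Sg l (@setUC T)).
have card_C (G : {set T}) :
    (#|G| <= kg l)%N -> (#|G :|: Gam (other l)| <= kg ord0 + kg ord_max)%N.
  move=> small_G; rewrite -(other_comm _ kg l addnC).
  exact: leq_trans (leq_card_setU _ _) (leq_add small_G small_o).
have /set0Pn[x0 _] : Gam l != set0.
  by rewrite -card_gt0 (leq_ltn_trans _ small_l).
have [C0 feasible_C0 rsE] := opt_radius_attained (d := d) Sg kg.
move: indep rsE (opt_radius_ge0 metric_d x0 Sg kg).
case: (opt_radius d Sg kg) => [r| |//] indep rsE _.
- have small_far :
      (#|far_centers d (Gam l) (Gam (other l)) (3 * r)%:E| <= kg l)%N.
    have costC0 : cost d C0 <= r%:E by rewrite -rsE.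
    apply: leq_trans (card_far_le metric_d cover_l (indep l) (indep _) costC0) _.
    by move/forallP: feasible_C0.
  split=> //; first exact: card_C.
  by move=> s; apply: (dist_far_centers_le metric_d cover_l (indep l) (indep _)).
- (* r* = +oo only when every feasible set is empty; then Γ'_l is empty. *)
  have far0 : [set i in Gam l | 3%:E * +oo < dist d i (Gam (other l))] = set0.
    by apply/setP => i; rewrite !inE mulry gtr0_sg // mul1e ltNge leey andbF.
  rewrite far0; split=> //; first by rewrite cards0.
    by apply: card_C; rewrite cards0.
  by move=> s; rewrite mulry gtr0_sg // mul1e leey.
Qed.
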